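(* Let $A\in\mathbb{R}^{n\times d}$ be fixed with all rows of Euclidean norm at most $2$, let $c,c'\in\mathbb{R}^d$ be fixed, and let $I\in\binom{[n]}{d}$ with $A_I$ invertible. If $Z\in\mathbb{R}^d$ has a $1$-log-Lipschitz probability density function, then for $m=\ln(1/0.99)/(2d)$, \[ \Pr\big[I\in M(A,c+Z,c'+Z,m)\big]\ge 0.99\Pr\big[I\in M(A,c+Z,c'+Z,0)\big]. \]
   Context: $M(A,y,y',m)$ is the set of bases $I\in\binom{[n]}{d}$ such that there exists $w\in[y,y']$ with $w^\top A_I^{-1}\ge m$ componentwise. A density $\mu$ is $1$-log-Lipschitz if $|\log\mu(x)-\log\mu(y)|\le\|x-y\|$ for all $x,y$. *)

From HB Require Import structures.
From mathcomp Require Import all_boot all_order all_algebra.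
From mathcomp Require Import all_classical all_reals all_analysis.

Set Implicit Arguments.
Unset Strict Implicit.
Unset Printing Implicit Defensive.

Import Order.TTheory GRing.Theory Num.Theory.
Local Open Scope ring_scope.
Local Open Scope classical_set_scope.

Section Defs.
Variable R : realType.

Definition enorm (d : nat) (v : 'rV[R]_d) : R := Num.sqrt (\sum_(j < d) v 0 j ^+ 2).

(* A_I : the d x d submatrix of A made of the rows indexed by I (in increasing
   order of index); meaningful when #|I| = d. *)
Definition subrows (n d : nat) (A : 'M[R]_(n, d)) (I : {set 'I_n}) : 'M[R]_d :=
  \matrix_(i < d, j < d) nth 0 [seq A k j | k <- enum I] i.

(* M(A,y,y',m): the bases I (|I| = d, A_I invertible) such that some w on the
   segment [y,y'] satisfies w^T A_I^{-1} >= m componentwise.  Vectors of R^d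
   are represented as row vectors, so w^T is just w. *)
Definition Mset (n d : nat) (A : 'M[R]_(n, d)) (y y' : 'rV[R]_d) (m : R)
  : set {set 'I_n} :=
  [set I : {set 'I_n} | [/\ #|I| = d, subrows A I \in unitmx &
     exists2 t : R, 0 <= t <= 1 &
       forall j : 'I_d, m <= (((1 - t) *: y + t *: y') *m invmx (subrows A I)) 0 j]].

(* Iterated Lebesgue integral over R^k of a function of the coordinates
   (coordinates are given by a function nat -> R; only the first k matter). *)
Fixpoint iint (k : nat) (F : (nat -> R) -> \bar R) : \bar R :=
  match k with
  | 0 => F (fun _ => 0)
  | k'.+1 => (\int[@lebesgue_measure R]_t
                iint k' (fun x => F (fun i => if i == k' then t else x i)))%E
  end.

(* Lebesgue integral over R^d (as an iterated integral, which is the Lebesgue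
   integral on R^d for nonnegative Borel functions by Tonelli). *)
Definition leb_int (d : nat) (f : 'rV[R]_d -> \bar R) : \bar R :=
  iint d (fun x => f (\row_(i < d) x i)).

Definition is_pdf (d : nat) (mu : 'rV[R]_d -> R) : Prop :=
  (forall x, 0 <= mu x) /\ leb_int (fun x => (mu x)%:E) = 1%E.

(* mu is 1-log-Lipschitz (this requires mu > 0 so that log mu is defined). *)
Definition log_lipschitz1 (d : nat) (mu : 'rV[R]_d -> R) : Prop :=
  (forall x, 0 < mu x) /\
  (forall x y, `|ln (mu x) - ln (mu y)| <= enorm (x - y)).

Definition Pr (d : nat) (mu : 'rV[R]_d -> R) (S : set 'rV[R]_d) : \bar R :=
  leb_int (fun x => (\1_S x * mu x)%:E).

End Defs.

From HB Require Import structures.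
From mathcomp Require Import all_boot all_order all_algebra.
From mathcomp Require Import all_classical all_reals all_analysis.
From mathcomp Require Import ring lra.

Import Order.TTheory GRing.Theory Num.Theory.
Local Open Scope ring_scope.
Local Open Scope classical_set_scope.

Set Implicit Arguments.
Unset Strict Implicit.
Unset Printing Implicit Defensive.

(* Shifting Z by v := m (1 A_I) moves every point w of the segment
   [c + Z, c' + Z] to w + v, and v A_I^-1 = m 1, so the event for threshold 0
   at Z implies the event for threshold m at Z + v.  The rows of A_I have norm
   at most 2, hence |v| <= 2 d m = ln (1/0.99), and a 1-log-Lipschitz density
   satisfies mu (z + v) >= e^-|v| mu z >= 0.99 mu z.  Translation invariance of
   Lebesgue measure then gives
   Pr[Z in S_m] = \int 1_{S_m}(z + v) mu (z + v) dz >= 0.99 Pr[Z in S_0]. *)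

Section lebesgue_translation.
Context {R : realType}.
Local Notation mu := (@lebesgue_measure R).
Variable a : R.

Lemma measurable_addr : measurable_fun [set: R] (fun x => x + a).
Proof. exact: measurable_realfun.measurable_funD. Qed.

Lemma lebesgue_measure_addr (A : set R) : measurable A ->
  mu ((fun x => x + a) @^-1` A) = mu A.
Proof.
move=> mA; change (pushforward mu ((fun x => x + a) : _ -> measurableTypeR R) A = mu A).
apply/esym/lebesgue_measure_unique => [|mf _ [[x y] _ <-]|] //; first exact: measurable_addr.
rewrite /= /pushforward (_ : _ @^-1` _ = `](x - a), (y - a)]%classic); last first.
  by apply/seteqP; split => t; rewrite /= !in_itv /= ltrBlDr lerBrDr.
rewrite !lebesgue_measure_itv /= !lte_fin ltrD2r; case: ifP => // _.
by rewrite -!EFinD opprB addrA subrK.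
Qed.

End lebesgue_translation.

Import HBNNSimple.

(* The integrands of this development are not known to be measurable, so
   monotonicity, scaling and translation are proved directly from the integral
   of a nonnegative function as a supremum over the simple functions below it. *)
Section ge0_integral_nonmeasurable.
Local Open Scope ereal_scope.
Context d (T : measurableType d) (R : realType) (mu : {measure set T -> \bar R}).
Implicit Types F G : T -> \bar R.

Lemma ge0_le_integralT F G : (forall x, 0 <= F x) -> (forall x, F x <= G x) ->
  \int[mu]_x F x <= \int[mu]_x G x.
Proof.
move=> F0 FG; have G0 x : 0 <= G x by exact: le_trans (F0 x) (FG x).
rewrite !ge0_integralTE //; apply: le_ereal_sup => _ [h hF <-].
by exists h => // x; exact: le_trans (hF x) (FG x).
Qed.

Lemma ge0_le_integralZlT (k : R) F : (0 <= k)%R -> (forall x, 0 <= F x) ->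
  k%:E * \int[mu]_x F x <= \int[mu]_x (k%:E * F x).
Proof.
move=> k0 F0; have [->|kn0] := eqVneq k 0%R.
  by rewrite mul0e; apply: integral_ge0 => x _; rewrite mul0e.
have k_gt0 : (0 < k)%R by rewrite lt0r kn0.
rewrite !ge0_integralTE //; last by move=> x; rewrite mule_ge0.
rewrite -ereal_sup_pZl //; apply: le_ereal_sup => _ [_ [h hF <-] <-].
exists (scale_nnsfun h k0); last exact: sintegralrM.
by move=> x /=; rewrite EFinM; apply: lee_pmul => //; rewrite lee_fin; exact: fun_ge0.
Qed.

End ge0_integral_nonmeasurable.

Section nnsfun_addr.
Context {R : realType} (a : R) (h : {nnsfun measurableTypeR R >-> R}).

Definition nnsfun_addr_fun : measurableTypeR R -> R := fun t => h (t + a).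

Let mh : measurable_fun [set: measurableTypeR R] nnsfun_addr_fun.
Proof. exact: measurableT_comp (measurable_funPT h) (measurable_addr a). Qed.
HB.instance Definition _ := isMeasurableFun.Build _ _ _ _ nnsfun_addr_fun mh.

Let fh : finite_set (range nnsfun_addr_fun).
Proof. by apply: sub_finite_set (fimfunP h) => _ [t _ <-]; exists (t + a). Qed.
HB.instance Definition _ := FiniteImage.Build _ _ nnsfun_addr_fun fh.

Let h0 x : (0 <= nnsfun_addr_fun x)%R. Proof. exact: fun_ge0. Qed.
HB.instance Definition _ := isNonNegFun.Build _ _ nnsfun_addr_fun h0.

Definition nnsfun_addr : {nnsfun measurableTypeR R >-> R} := nnsfun_addr_fun.

Lemma sintegral_nnsfun_addr :
  sintegral lebesgue_measure nnsfun_addr = sintegral lebesgue_measure h.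
Proof.
apply: eq_fsbigr => x _; congr (_ * _)%E.
exact: (lebesgue_measure_addr a (measurable_sfunP h (measurable_set1 x))).
Qed.

End nnsfun_addr.

Section ge0_integral_translation.
Local Open Scope ereal_scope.
Context {R : realType}.
Local Notation mu := (@lebesgue_measure R).

Let ge0_le_integral_addr (F : R -> \bar R) (a : R) : (forall x, 0 <= F x) ->
  \int[mu]_x F x <= \int[mu]_x F (x + a)%R.
Proof.
move=> F0; rewrite !ge0_integralTE //.
apply: ge_ereal_sup => _ [h hF <-]; apply: ereal_sup_ubound.
by exists (nnsfun_addr a h); [move=> t; exact: hF|exact: sintegral_nnsfun_addr].
Qed.

Lemma ge0_integral_addr (F : R -> \bar R) (a : R) : (forall x, 0 <= F x) ->
  \int[mu]_x F (x + a)%R = \int[mu]_x F x.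
Proof.
move=> F0; apply/eqP; rewrite eq_le ge0_le_integral_addr // andbT.
apply: le_trans (@ge0_le_integral_addr (fun x => F (x + a)%R) (- a)%R _) _ => //.
by under eq_fun do rewrite subrK.
Qed.

End ge0_integral_translation.

Section iterated_integral.
Local Open Scope ereal_scope.
Context {R : realType}.
Implicit Types F G : (nat -> R) -> \bar R.

Lemma iint_ge0 k F : (forall x, 0 <= F x) -> 0 <= iint k F.
Proof.
elim: k F => [|k IH] F F0 /=; first exact: F0.
by apply: integral_ge0 => t _; apply: IH.
Qed.

Lemma ge0_le_iint k F G : (forall x, 0 <= F x) -> (forall x, F x <= G x) ->
  iint k F <= iint k G.
Proof.
elim: k F G => [|k IH] F G F0 FG /=; first exact: FG.
by apply: ge0_le_integralT => t; [exact: iint_ge0|exact: IH].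
Qed.

Lemma ge0_le_iintZl k (c : R) F : (0 <= c)%R -> (forall x, 0 <= F x) ->
  c%:E * iint k F <= iint k (fun x => c%:E * F x).
Proof.
move=> c0; elim: k F => [|k IH] F F0 //=.
apply: le_trans (ge0_le_integralZlT _ c0 _) _ => [t|]; first exact: iint_ge0.
apply: ge0_le_integralT => t; last exact: IH.
by rewrite mule_ge0 //; exact: iint_ge0.
Qed.

Lemma ge0_iint_translate k F (a : nat -> R) :
  (forall i, (k <= i)%N -> a i = 0%R) -> (forall x, 0 <= F x) ->
  iint k (fun x => F (fun i => x i + a i)%R) = iint k F.
Proof.
elim: k F a => [|k IH] F a a0 F0 /=.
  by congr F; apply/funext => i; rewrite a0 // addr0.
pose a' i := if i == k then 0%R else a i.
have a'0 i : (k <= i)%N -> a' i = 0%R.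
  move=> ki; rewrite /a'; case: eqP => // /eqP ik.
  by apply: a0; rewrite ltn_neqAle ki andbT eq_sym.
transitivity (\int[lebesgue_measure]_t
    iint k (fun x => F (fun i => if i == k then (t + a k)%R else x i))).
  apply: eq_integral => t _.
  rewrite -(IH (fun y => F (fun i => if i == k then (t + a k)%R else y i)) a') //.
  apply: congr1; apply/funext => x; congr F; apply/funext => i.
  by rewrite /a'; case: eqP => [->|_]; rewrite ?addr0.
pose G s := iint k (fun x => F (fun i => if i == k then s else x i)).
by rewrite (ge0_integral_addr (F := G)) // => s; exact: iint_ge0.
Qed.

End iterated_integral.

Section lebesgue_integral_rV.
Local Open Scope ereal_scope.
Context {R : realType} {d : nat}.
Implicit Types f g : 'rV[R]_d -> \bar R.

Lemma ge0_le_leb_int f g : (forall x, 0 <= f x) -> (forall x, f x <= g x) ->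
  leb_int f <= leb_int g.
Proof. by move=> f0 fg; apply: ge0_le_iint. Qed.

Lemma ge0_le_leb_intZl (c : R) f : (0 <= c)%R -> (forall x, 0 <= f x) ->
  c%:E * leb_int f <= leb_int (fun x => c%:E * f x).
Proof. by move=> c0 f0; apply: ge0_le_iintZl. Qed.

Lemma ge0_leb_int_translate f (v : 'rV[R]_d) : (forall x, 0 <= f x) ->
  leb_int (fun x => f (x + v)%R) = leb_int f.
Proof.
move=> f0; pose a i := (if insub i is Some j then v 0 j else 0)%R.
have a0 i : (d <= i)%N -> a i = 0%R by rewrite /a leqNgt => /negbTE ?; rewrite insubF.
rewrite /leb_int -(ge0_iint_translate (F := fun x => f (\row_i x i)) a0) //.
congr iint; apply/funext => x.
by congr f; apply/rowP => i; rewrite !mxE /a valK.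
Qed.

Lemma Pr_translate_ge (mu : 'rV[R]_d -> R) (S S' : set 'rV[R]_d) (v : 'rV[R]_d) (k : R) :
  (0 <= k)%R -> (forall x, 0 <= mu x)%R ->
  (forall z, S z -> S' (z + v)%R) -> (forall z, k * mu z <= mu (z + v))%R ->
  k%:E * Pr mu S <= Pr mu S'.
Proof.
move=> k0 mu0 SS' kmu; rewrite /Pr.
have ind_mu0 A x : (0 <= \1_A x * mu x)%R by rewrite mulr_ge0.
apply: le_trans (ge0_le_leb_intZl k0 _) _ => [x|]; first by rewrite lee_fin.
rewrite -(ge0_leb_int_translate (f := fun x => (\1_S' x * mu x)%:E) v) => [|x];
  last by rewrite lee_fin.
apply: ge0_le_leb_int => x; first by rewrite -EFinM lee_fin mulr_ge0.
rewrite -EFinM lee_fin !indicE; have [Sx|] := boolP (x \in S); last first.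
  by rewrite mul0r mulr0 ind_mu0.
by rewrite (mem_set (SS' _ (set_mem Sx))) !mul1r.
Qed.

End lebesgue_integral_rV.

Section euclidean_norm.
Context {R : realType} {d : nat}.
Implicit Types u v : 'rV[R]_d.

Lemma enorm_ge0 v : 0 <= enorm v.
Proof. exact: sqrtr_ge0. Qed.

Let sumr_sqr_ge0 v : 0 <= \sum_j v 0 j ^+ 2.
Proof. by rewrite sumr_ge0 // => j _; exact: sqr_ge0. Qed.

Lemma sqr_enorm v : enorm v ^+ 2 = \sum_j v 0 j ^+ 2.
Proof. exact: sqr_sqrtr. Qed.

Lemma enorm0 : enorm (0 : 'rV[R]_d) = 0.
Proof. by rewrite /enorm big1 ?sqrtr0 // => j _; rewrite mxE expr0n. Qed.

Lemma enormZ (k : R) v : enorm (k *: v) = `|k| * enorm v.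
Proof.
rewrite /enorm -sqrtr_sqr -sqrtrM ?sqr_ge0 // mulr_sumr.
by congr Num.sqrt; apply: eq_bigr => j _; rewrite mxE exprMn.
Qed.

Lemma dot_le_enorm u v : \sum_j u 0 j * v 0 j <= enorm u * enorm v.
Proof.
set p := \sum_j _; set su := \sum_j u 0 j ^+ 2; set sv := \sum_j v 0 j ^+ 2.
have lagrange : su * sv + sv * su - 2 * (p * p) =
    \sum_i \sum_j (u 0 i * v 0 j - u 0 j * v 0 i) ^+ 2.
  rewrite !big_distrlr mulr_sumr -big_split -sumrB; apply: eq_bigr => i _.
  by rewrite mulr_sumr -big_split -sumrB; apply: eq_bigr => j _ /=; ring.
have p2_le : p ^+ 2 <= su * sv.
  have : 0 <= su * sv + sv * su - 2 * (p * p).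
    by rewrite lagrange sumr_ge0 // => i _; rewrite sumr_ge0 // => j _; exact: sqr_ge0.
  rewrite [sv * su]mulrC expr2; lra.
apply: le_trans (ler_norm p) _; rewrite -sqrtr_sqr -sqrtrM // ler_sqrt //.
exact: mulr_ge0.
Qed.

Lemma enormD u v : enorm (u + v) <= enorm u + enorm v.
Proof.
rewrite -(@ler_pXn2r _ 2) // ?nnegrE ?addr_ge0 ?enorm_ge0 //.
rewrite sqrrD !sqr_enorm -lerBlDr.
have -> : \sum_j (u + v) 0 j ^+ 2 - \sum_j v 0 j ^+ 2 =
    \sum_j u 0 j ^+ 2 + (\sum_j u 0 j * v 0 j) *+ 2.
  rewrite -mulr_natr mulr_suml -!big_split -sumrB; apply: eq_bigr => j _ /=.
  by rewrite !mxE; ring.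
by rewrite lerD2l lerMn2r dot_le_enorm.
Qed.

Lemma enorm_sum (I : finType) (F : I -> 'rV[R]_d) :
  enorm (\sum_i F i) <= \sum_i enorm (F i).
Proof.
apply: (big_ind2 (fun x y => enorm x <= y)) => [|x a y b xa yb|i _].
- by rewrite enorm0.
- by apply: le_trans (enormD x y) _; exact: lerD.
- exact: lexx.
Qed.

End euclidean_norm.

Section bases.
Context {R : realType} {n d : nat} (A : 'M[R]_(n, d)).

Lemma row_subrows (I : {set 'I_n}) : #|I| = d ->
  forall j, exists k, row j (subrows A I) = row k A.
Proof.
move=> cardI j; have : (j < size (enum I))%N by rewrite -cardE cardI.
case E : (enum I) => [|k0 s] // js; exists (nth k0 (enum I) j).
by apply/rowP => l; rewrite !mxE E (nth_map k0).
Qed.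

Lemma Mset_translate (I : {set 'I_n}) (y y' v : 'rV[R]_d) (m m' : R) :
  v *m invmx (subrows A I) = const_mx m' ->
  I \in Mset A y y' m -> I \in Mset A (y + v) (y' + v) (m + m').
Proof.
move=> vA; rewrite !inE => -[cardI AI [t t01 ht]]; split => //; exists t => // j.
have -> : (1 - t) *: (y + v) + t *: (y' + v) = (1 - t) *: y + t *: y' + v.
  by rewrite !scalerDr addrACA -scalerDl subrK scale1r.
by rewrite mulmxDl vA mxE [const_mx _ _ _]mxE lerD2r ht.
Qed.

End bases.

Lemma enorm_mulmx_const1 {R : realType} {k d : nat} (M : 'M[R]_(k, d)) (b : R) :
  (forall i, enorm (row i M) <= b) -> enorm (const_mx 1 *m M) <= k%:R * b.
Proof.
move=> Mb; rewrite mulmx_sum_row; apply: le_trans (enorm_sum _) _.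
rewrite mulr_natl -[in b *+ _](card_ord k) -sumr_const; apply: ler_sum => i _.
by rewrite enormZ mxE normr1 mul1r.
Qed.

Lemma log_lipschitz1_translate {R : realType} {d : nat} (mu : 'rV[R]_d -> R) :
  log_lipschitz1 mu -> forall z v, expR (- enorm v) * mu z <= mu (z + v).
Proof.
move=> [mu_gt0 lip] z v; have := lip (z + v) z; rewrite addrAC subrr add0r.
rewrite ler_norml => /andP[lnz_le _].
by rewrite -[mu z]lnK ?posrE // -[mu (z + v)]lnK ?posrE // -expRD ler_expR -lerBrDr.
Qed.

Theorem corollary4p6 (R : realType) (n d : nat) (A : 'M[R]_(n, d))
  (hA : forall i : 'I_n, enorm (row i A) <= 2)
  (c c' : 'rV[R]_d) (I : {set 'I_n}) (hI : #|I| = d)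
  (hAI : subrows A I \in unitmx)
  (mu : 'rV[R]_d -> R) (hpdf : is_pdf mu) (hlip : log_lipschitz1 mu) :
  let m := ln ((99 / 100 : R)^-1) / (2 * d%:R) in
  (Pr mu [set z | I \in Mset A (c + z) (c' + z) m] >=
   (99 / 100 : R)%:E * Pr mu [set z | I \in Mset A (c + z) (c' + z) 0])%E.
Proof.
cbv zeta; set L := ln _; set m := L / _; set AI := subrows A I.
have L_ge0 : 0 <= L by rewrite ln_ge0 // invf_ge1 //; lra.
have m_ge0 : 0 <= m by rewrite divr_ge0 // mulr_ge0.
pose v : 'rV[R]_d := m *: (const_mx 1 *m AI).
have vAI : v *m invmx AI = const_mx m.
  by rewrite -scalemxAl -mulmxA mulmxV // mulmx1; apply/rowP => j; rewrite !mxE mulr1.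
have v_le : enorm v <= L.
  rewrite enormZ ger0_norm //; apply: le_trans (_ : m * (d%:R * 2) <= L).
    apply: ler_wpM2l => //; apply: enorm_mulmx_const1 => j.
    by have [k ->] := row_subrows A hI j.
  have [->|d_gt0] := posnP d; first by rewrite mul0r mulr0.
  by rewrite [d%:R * 2]mulrC divfK // mulf_neq0 // pnatr_eq0 -lt0n.
apply: (Pr_translate_ge (v := v)) => [|||z]; first lra.
- exact: hpdf.1.
- by move=> z /= /(Mset_translate vAI); rewrite add0r !addrA.
- apply: le_trans (log_lipschitz1_translate hlip z v).
  rewrite ler_wpM2r ?(ltW (hlip.1 z)) //.
  have -> : 99 / 100 = expR (- L) by rewrite expRN lnK ?invrK // posrE invr_gt0; lra.
  by rewrite ler_expR lerN2.
Qed.
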